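(* Let $n \ge 2$ and $0 \le s \le 2n-2$. The number of Dyck paths of semilength $n$ in which the sum of the heights of the first peak and the last peak equals $s$ is \[ \sum_{j=1}^{\lfloor s/2\rfloor} (-1)^{j-1}\, j \binom{s-j}{j} C_{n-1-j}, \] where $C_r = \frac{1}{r+1}\binom{2r}{r}$ is the $r$-th Catalan number.
   Context: A Dyck path of semilength $n$ is a lattice path from $(0,0)$ to $(2n,0)$ with steps $U=(1,1)$ and $D=(1,-1)$ never going below the $x$-axis. A peak is an up-step immediately followed by a down-step; its height is the $y$-coordinate at the end of its up-step. If the path has only one peak, that peak is both the first and the last peak. *)

From mathcomp Require Import all_boot all_order all_algebra.
Set Implicit Arguments. Unset Strict Implicit. Unset Printing Implicit Defensive.

(* A lattice path is a sequence of steps: true = U = (1,1), false = D = (1,-1). *)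

(* height after the first k steps (meaningful when it is >= 0) *)
Definition height (p : seq bool) (k : nat) : nat :=
  count id (take k p) - count negb (take k p).

Definition dyck (n : nat) (p : seq bool) : bool :=
  [&& size p == 2 * n,
      all (fun k => count negb (take k p) <= count id (take k p)) (iota 0 (size p).+1)
    & count id p == count negb p].

Definition peaks (p : seq bool) : seq nat :=
  [seq i <- iota 0 (size p).-1 | nth false p i && ~~ nth false p i.+1].

(* height of a peak at position i = y-coordinate at the end of its up-step *)
Definition first_peak_height (p : seq bool) : nat := height p (head 0 (peaks p)).+1.
Definition last_peak_height (p : seq bool) : nat := height p (last 0 (peaks p)).+1.

Definition catalan (r : nat) : nat := 'C(r.*2, r) %/ r.+1.

From mathcomp Require Import all_boot all_order all_algebra.
From mathcomp Require Import zify ring.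
Set Implicit Arguments. Unset Strict Implicit. Unset Printing Implicit Defensive.

(* A Dyck path of semilength n whose first and last peaks have heights a + 1 and b + 1,
   with s = a + b + 2 <= 2n - 2, factors uniquely as U^(a+1) D q U D^(b+1), where q is a
   path of length 2n - s - 2 from height a to height b never going below 0.  Splitting off
   the first step of q gives N(n, s) + N(n-1, s-2) = N(n, s-1) + B(n-1, s-2), where B(m, t)
   counts nonnegative paths from 0 to t of length 2m - t - 2.  Removing their last step gives
   B(m, t) = B(m, t-1) - B(m-1, t-2), and B(m, 0) = C_(m-1) by the reflection principle, so
   B(m, t) = sum_j (-1)^j C(t-j, j) C_(m-1-j); by Pascal's rule the claimed closed form
   satisfies the same recurrence as N. *)

Fixpoint bool_seqs (n : nat) : seq (seq bool) :=
  if n is n'.+1 then [seq true :: s | s <- bool_seqs n'] ++ [seq false :: s | s <- bool_seqs n']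
  else [:: [::]].

Lemma cons_inj (T : Type) (x : T) : injective (cons x).
Proof. by move=> s t []. Qed.

Lemma mem_bool_seqs n s : (s \in bool_seqs n) = (size s == n).
Proof.
elim: n s => [|n IHn] [|b s] //=; rewrite mem_cat.
- by apply/negbTE/norP; split; apply/mapP => -[].
- rewrite eqSS -IHn; case: b; rewrite (mem_map (@cons_inj _ _)).
  + by case: (s \in _) => //=; apply/mapP => -[].
  + by rewrite orbC; case: (s \in _) => //=; apply/mapP => -[].
Qed.

Lemma uniq_bool_seqs n : uniq (bool_seqs n).
Proof.
elim: n => [|n IHn] //=; rewrite cat_uniq !(map_inj_uniq (@cons_inj _ _)) IHn /= andbT.
by apply/hasPn => _ /mapP [s _ ->]; apply/mapP => -[].
Qed.

Lemma count_bool_seqs_perm (P : pred (seq bool)) (l : seq (seq bool)) n :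
  uniq l -> (forall s, (s \in l) = (size s == n)) -> count P l = count P (bool_seqs n).
Proof.
move=> ul meml; apply/permP/uniq_perm; rewrite ?uniq_bool_seqs // => s.
by rewrite meml mem_bool_seqs.
Qed.

Lemma card_tuple_bool n (P : pred (seq bool)) :
  #|[set t : n.-tuple bool | P t]| = count P (bool_seqs n).
Proof.
rewrite cardsE cardE /enum_mem size_filter -enumT -(count_map val P).
apply: count_bool_seqs_perm; first by rewrite (map_inj_uniq val_inj) enum_uniq.
move=> s; apply/mapP/eqP => [[t _ ->]|sz_s]; first exact: size_tuple.
by exists (Tuple (introT eqP sz_s)); rewrite ?mem_enum.
Qed.

Lemma count_bool_seqs_bij (P Q : pred (seq bool)) m n (f : seq bool -> seq bool) :
  injective f ->
  (forall q, size q = n -> Q q -> size (f q) = m /\ P (f q)) ->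
  (forall p, size p = m -> P p -> exists2 q, size q = n /\ Q q & p = f q) ->
  count P (bool_seqs m) = count Q (bool_seqs n).
Proof.
move=> inj_f fQ fP; rewrite -!size_filter -[RHS](size_map f).
apply/perm_size/uniq_perm; rewrite ?(map_inj_uniq inj_f) ?filter_uniq ?uniq_bool_seqs //.
move=> p; rewrite mem_filter mem_bool_seqs; apply/andP/mapP.
- case=> Pp /eqP /fP/(_ Pp) [q [sz_q Qq] ->].
  by exists q; rewrite // mem_filter mem_bool_seqs Qq sz_q eqxx.
- case=> q; rewrite mem_filter mem_bool_seqs => /andP [Qq /eqP sz_q] ->.
  by have [-> ->] := fQ q sz_q Qq.
Qed.

Lemma count_partition (T : eqType) (P : pred T) (f : T -> nat) (l : seq T) N :
  (forall x, x \in l -> P x -> f x < N) ->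
  count P l = \sum_(0 <= i < N) count (fun x => P x && (f x == i)) l.
Proof.
elim: l => [|x l IHl] fN /=; first by rewrite big1.
rewrite big_split /= -IHl => [|y ly]; last by apply: fN; rewrite inE ly orbT.
congr (_ + _); case Px: (P x) => /=; last by rewrite big1.
rewrite (bigD1_seq (f x)) ?iota_uniq ?mem_index_iota ?fN ?mem_head //= eqxx big1 // => i.
by rewrite eq_sym => /negbTE ->.
Qed.

(** * Nonnegative paths *)

Fixpoint nonneg_path (h k : nat) (q : seq bool) : bool :=
  match q with
  | [::] => h == k
  | true :: q' => nonneg_path h.+1 k q'
  | false :: q' => if h is h'.+1 then nonneg_path h' k q' else false
  end.

Definition npaths (h k L : nat) : nat := count (nonneg_path h k) (bool_seqs L).

Lemma nonneg_path_rcons h k q b :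
  nonneg_path h k (rcons q b) =
  if b then (if k is k'.+1 then nonneg_path h k' q else false) else nonneg_path h k.+1 q.
Proof.
elim: q h => [|[] q IHq] [|h] //=; rewrite ?IHq //.
all: by clear IHq; case: b; case: k.
Qed.

Lemma nonneg_path_nseq_true h k a q :
  nonneg_path h k (nseq a true ++ q) = nonneg_path (h + a) k q.
Proof. by elim: a h => [|a IHa] h /=; rewrite ?addn0 // IHa addnS. Qed.

Lemma nonneg_path_nseq_false h k b q :
  nonneg_path h k (q ++ nseq b false) = nonneg_path h (k + b) q.
Proof.
elim: b k => [|b IHb] k; first by rewrite cats0 addn0.
by rewrite -addn1 nseqD catA cats1 nonneg_path_rcons IHb addn1 addSnnS.
Qed.

Lemma nonneg_path_end_le h k q : nonneg_path h k q -> k <= h + size q.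
Proof.
elim: q h => [|[] q IHq] [|h] //=; rewrite ?addn0; try by move/eqP->.
all: by move/IHq; lia.
Qed.

Lemma npathsS h k L :
  npaths h k L.+1 = npaths h.+1 k L + (if h is h'.+1 then npaths h' k L else 0).
Proof.
rewrite /npaths /= count_cat !count_map; congr (_ + _).
by case: h => [|h]; rewrite ?count_pred0.
Qed.

Lemma npathsSr h k L :
  npaths h k L.+1 = (if k is k'.+1 then npaths h k' L else 0) + npaths h k.+1 L.
Proof.
pose ends_with b := [seq rcons s b | s <- bool_seqs L].
rewrite /npaths -(@count_bool_seqs_perm _ (ends_with true ++ ends_with false)).
- rewrite count_cat !count_map; congr (_ + _).
  + case: k => [|k]; first rewrite -[RHS](count_pred0 (bool_seqs L));
      by apply: eq_count => s; rewrite /= nonneg_path_rcons.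
  + by apply: eq_count => s; rewrite /= nonneg_path_rcons.
- rewrite cat_uniq !(map_inj_uniq (@rcons_injl _ _)) uniq_bool_seqs /= andbT.
  by apply/hasPn => _ /mapP [s _ ->]; apply/mapP => -[t _ /rcons_inj []].
- case/lastP => [|s b]; rewrite mem_cat ?size_rcons.
    by apply/norP; split; apply/mapP => -[[]].
  rewrite eqSS -mem_bool_seqs; case: b.
  + rewrite (mem_map (@rcons_injl _ true)); case: (s \in _) => //=.
    by apply/mapP => -[t _ /rcons_inj []].
  + rewrite (mem_map (@rcons_injl _ false)) orbC; case: (s \in _) => //=.
    by apply/mapP => -[t _ /rcons_inj []].
Qed.

Lemma npaths_eq0 h k L : h + L < k -> npaths h k L = 0.
Proof.
move=> far; apply/eqP; rewrite -leqn0 leqNgt -has_count; apply/hasPn => q.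
rewrite mem_bool_seqs => /eqP sz_q; apply/negP => /nonneg_path_end_le; rewrite sz_q; lia.
Qed.

Lemma npaths0_reflection u v : v <= u ->
  npaths 0 (u - v) (u + v) + 'C(u + v, u.+1) = 'C(u + v, u).
Proof.
move=> le_vu; move def_L: (u + v) => L.
elim: L u v def_L le_vu => [|L IHL] u v def_L le_vu.
  by case: u v def_L le_vu => [|?] [|?].
case: u def_L le_vu => [|u] def_L le_vu; first by case: v def_L le_vu.
rewrite npathsSr !binS.
case def_k: (u.+1 - v) => [|k].
- have IH : npaths 0 1 L + 'C(L, u.+2) = 'C(L, u.+1).
    by have := IHL u.+1 u; rewrite subSnn; apply; lia.
  have symm : 'C(L, u) = 'C(L, u.+1) by rewrite -bin_sub; [congr 'C(_, _)|]; lia.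
  lia.
- have IH1 : npaths 0 k L + 'C(L, u.+1) = 'C(L, u).
    have -> : k = u - v by lia.
    by apply: IHL; lia.
  case: v def_L le_vu def_k => [|v] def_L le_vu def_k.
  + have [C1 C2] : 'C(L, u.+1) = 0 /\ 'C(L, u.+2) = 0 by rewrite !bin_small; lia.
    rewrite (@npaths_eq0 0 k.+2); lia.
  + have IH2 : npaths 0 k.+2 L + 'C(L, u.+2) = 'C(L, u.+1).
      have -> : k.+2 = u.+1 - v by lia.
      by apply: IHL; lia.
    lia.
Qed.

Lemma catalan_npaths r : catalan r = npaths 0 0 r.*2.
Proof.
have := npaths0_reflection (leqnn r); rewrite subnn addnn => reflect_r.
have := mul_bin_left r.*2 r; rewrite -addnn addnK addnn => bin_r.
rewrite /catalan (_ : 'C(r.*2, r) = r.+1 * npaths 0 0 r.*2) ?mulKn //; nia.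
Qed.

(** * Dyck paths and their outermost peaks *)

Lemma nonneg_path_countE h q : nonneg_path h 0 q =
  all (fun k => count negb (take k q) <= h + count id (take k q)) (iota 0 (size q).+1)
  && (h + count id q == count negb q).
Proof.
elim: q h => [|b q IHq] h; first by rewrite /= addn0.
have -> : iota 0 (size (b :: q)).+1 = 0 :: map (addn 1) (iota 0 (size q).+1).
  by rewrite -iotaDl.
have I0 : 0 \in iota 0 (size q).+1 by [].
move: (iota 0 _) IHq I0 => I IHq I0; rewrite /= all_map.
case: b; [|case: h => [|h]]; rewrite /= ?IHq.
- congr andb; last by rewrite add1n addnS.
  by apply: eq_all => k; rewrite /= add1n /= addnS.
- by apply/esym/negbTE/nandP; left; apply/allPn; exists 0; rewrite //= take0.
- by congr andb.
Qed.

Lemma dyckE n p : dyck n p = (size p == 2 * n) && nonneg_path 0 0 p.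
Proof. by rewrite nonneg_path_countE. Qed.

Lemma first_peak_height_nseq a r : first_peak_height (nseq a.+1 true ++ false :: r) = a.+1.
Proof.
set p := _ ++ _.
have nth_p i : nth false p i = if i < a.+1 then true else nth false (false :: r) (i - a.+1).
  by rewrite nth_cat size_nseq; case: ifP => // lt_ia; rewrite nth_nseq lt_ia.
have height_p : height p a.+1 = a.+1.
  by rewrite /height take_size_cat ?size_nseq // !count_nseq /=; lia.
have size_p : (size p).-1 = a + (size r).+1 by rewrite size_cat size_nseq.
clearbody p; rewrite /first_peak_height /peaks size_p iotaD filter_cat add0n.
have -> : [seq i <- iota 0 a | nth false p i && ~~ nth false p i.+1] = [::].
  apply/eqP; rewrite -[_ == _]negbK -has_filter; apply/hasPn => i.
  by rewrite mem_iota add0n => /andP [_ lt_ia]; rewrite !nth_p ifT ?ifT //; lia.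
by rewrite /= !nth_p ltnSn ltnn subnn.
Qed.

Lemma last_peak_height_nseq r b (p := r ++ true :: nseq b.+1 false) :
  count id p = count negb p -> last_peak_height p = b.+1.
Proof.
move=> balanced_p.
have nth_p i : nth false p i = if i < size r then nth false r i
    else nth false (true :: nseq b.+1 false) (i - size r) by rewrite nth_cat.
have height_p : height p (size r).+1 = b.+1.
  move: balanced_p; rewrite /height take_cat ltnNge leqnSn /= subSnn /=.
  by rewrite !count_cat /= !count_nseq /=; lia.
have size_p : (size p).-1 = size r + b.+1 by rewrite size_cat /= size_nseq addnS.
clearbody p; rewrite /last_peak_height /peaks size_p iotaD filter_cat add0n /=.
have -> : [seq i <- iota (size r).+1 b | nth false p i && ~~ nth false p i.+1] = [::].
  apply/eqP; rewrite -[_ == _]negbK -has_filter; apply/hasPn => i.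
  rewrite mem_iota => /andP [lt_ri _]; rewrite nth_p ltnNge ltnW //=.
  by rewrite -(subnSK lt_ri) /=; case: (i - _) => //= j; rewrite nth_nseq if_same.
by rewrite !nth_p ltnn subnn ltnNge leqnSn /= subSnn /= last_cat.
Qed.

Lemma split_first_down p : has negb p -> exists a r, p = nseq a true ++ false :: r.
Proof.
elim: p => [|[] p IHp] //=; last by exists 0, p.
by case/IHp => a [r ->]; exists a.+1, r.
Qed.

Lemma split_last_up p : has id p -> exists r b, p = r ++ true :: nseq b false.
Proof.
elim/last_ind: p => [|p [] IHp] //; first by exists p, 0; rewrite cats1.
rewrite -cats1 has_cat orbF => /IHp [r [b ->]].
by exists r, b.+1; rewrite -catA /= -(nseqD b 1) addn1.
Qed.

Lemma dyck_count n p : dyck n p -> count id p = n /\ count negb p = n.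
Proof.
case/and3P => /eqP size_p _ /eqP balanced_p.
have := count_predC id p; rewrite size_p (eq_count (a1 := predC id) (a2 := negb)) //; lia.
Qed.

Lemma dyck_first_peak n p : 0 < n -> dyck n p ->
  exists a r, p = nseq a.+1 true ++ false :: r.
Proof.
move=> n_gt0 dyck_p; have [_ down_p] := dyck_count dyck_p.
have [[|a] [r def_p]] : exists a r, p = nseq a true ++ false :: r.
  by apply: split_first_down; rewrite has_count down_p.
- by move: dyck_p; rewrite dyckE def_p andbF.
- by exists a, r.
Qed.

Lemma dyck_last_peak n p : 0 < n -> dyck n p ->
  exists r b, p = r ++ true :: nseq b.+1 false.
Proof.
move=> n_gt0 dyck_p; have [up_p _] := dyck_count dyck_p.
have [r [[|b] def_p]] : exists r b, p = r ++ true :: nseq b false.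
  by apply: split_last_up; rewrite has_count up_p.
- by move: dyck_p; rewrite dyckE def_p cats1 nonneg_path_rcons andbF.
- by exists r, b.
Qed.

Definition framed (a b : nat) (q : seq bool) : seq bool :=
  nseq a.+1 true ++ false :: q ++ true :: nseq b.+1 false.

Lemma size_framed a b q : size (framed a b q) = a + b + size q + 4.
Proof. by rewrite /framed size_cat /= size_cat /= !size_nseq; lia. Qed.

Lemma nonneg_path_framed a b q : nonneg_path 0 0 (framed a b q) = nonneg_path a b q.
Proof.
rewrite /framed nonneg_path_nseq_true -cat_rcons -cat_cons nonneg_path_nseq_false /=.
by rewrite nonneg_path_rcons.
Qed.

Lemma framed_inj a b : injective (framed a b).
Proof.
have framedK q : take (size q) (drop a.+2 (framed a b q)) = q.
  rewrite /framed -cat1s catA drop_size_cat ?take_size_cat //.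
  by rewrite size_cat size_nseq addn1.
move=> q1 q2 eq_q; have size_q : size q1 = size q2.
  by move/(congr1 size): eq_q; rewrite !size_framed; lia.
by rewrite -[q1]framedK eq_q size_q framedK.
Qed.

Lemma split_cat_mid (T : Type) (p x y u v : seq T) : p = x ++ y -> p = u ++ v ->
  size x + size v <= size p -> p = x ++ take (size p - size x - size v) y ++ v.
Proof.
move=> def_p1 def_p2 sizes; have : drop (size u) p = v by rewrite def_p2 drop_size_cat.
have size_u : size u = size p - size v by rewrite def_p2 size_cat addnK.
rewrite {1}def_p1 drop_cat ifF; last by lia.
by rewrite size_u subnAC => drop_y; rewrite -{2}drop_y cat_take_drop.
Qed.

Lemma nonneg_path_balanced p : nonneg_path 0 0 p -> count id p = count negb p.
Proof. by rewrite nonneg_path_countE => /andP [_ /eqP]. Qed.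

Lemma peak_heights_framed a b q : nonneg_path a b q ->
  first_peak_height (framed a b q) = a.+1 /\ last_peak_height (framed a b q) = b.+1.
Proof.
rewrite -nonneg_path_framed => /nonneg_path_balanced.
rewrite /framed -cat_cons catA => balanced.
split; last exact: last_peak_height_nseq.
by rewrite -catA cat_cons first_peak_height_nseq.
Qed.

Lemma dyck_framed n p a b : 0 < n -> dyck n p ->
  first_peak_height p = a.+1 -> last_peak_height p = b.+1 -> a + b + 4 <= 2 * n ->
  exists q, p = framed a b q.
Proof.
move=> n_gt0 dyck_p fph_p lph_p sizes; have [up_p down_p] := dyck_count dyck_p.
have [a' [r def_p1]] := dyck_first_peak n_gt0 dyck_p.
have [r' [b' def_p2]] := dyck_last_peak n_gt0 dyck_p.
have [/eqP size_p _ _] := and3P dyck_p.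
have eq_a : a' = a by apply/succn_inj; rewrite -fph_p def_p1 first_peak_height_nseq.
have eq_b : b' = b.
  by apply/succn_inj; rewrite -lph_p def_p2 last_peak_height_nseq // -def_p2 up_p down_p.
rewrite -cat_rcons in def_p1.
have sizes' : size (rcons (nseq a'.+1 true) false) + size (true :: nseq b'.+1 false) <= size p.
  by rewrite size_rcons /= !size_nseq size_p; lia.
by rewrite {1}(split_cat_mid def_p1 def_p2 sizes') cat_rcons -eq_a -eq_b; eexists.
Qed.

Lemma dyck_peak_heights_gt0 n p : 0 < n -> dyck n p ->
  0 < first_peak_height p /\ 0 < last_peak_height p.
Proof.
move=> n_gt0 dyck_p; have [up_p down_p] := dyck_count dyck_p.
have [a [r def_p1]] := dyck_first_peak n_gt0 dyck_p.
have [r' [b def_p2]] := dyck_last_peak n_gt0 dyck_p.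
rewrite {1}def_p1 first_peak_height_nseq def_p2 last_peak_height_nseq //.
by rewrite -def_p2 up_p down_p.
Qed.

Definition frame_count (s L : nat) : nat := \sum_(0 <= a < s.-1) npaths a (s - 2 - a) L.

Definition ndyck_peaks (n s : nat) : nat :=
  count (fun p => dyck n p && (first_peak_height p + last_peak_height p == s))
        (bool_seqs (2 * n)).

Lemma ndyck_peaksE n s : 0 < n -> s <= 2 * n - 2 ->
  ndyck_peaks n s = frame_count s (2 * n - s - 2).
Proof.
move=> n_gt0 le_s_2n; rewrite /ndyck_peaks /frame_count.
rewrite (@count_partition _ _ (fun p => (first_peak_height p).-1) _ s.-1); last first.
  move=> p _ /andP [/(dyck_peak_heights_gt0 n_gt0) heights_gt0 /eqP]; lia.
apply: eq_big_nat => a /andP [_ lt_a_s].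
apply: (@count_bool_seqs_bij _ _ _ _ (framed a (s - 2 - a))); first exact: framed_inj.
- move=> q size_q path_q; have [-> ->] := peak_heights_framed path_q.
  have size_f : size (framed a (s - 2 - a) q) = 2 * n by rewrite size_framed; lia.
  by rewrite dyckE size_f nonneg_path_framed path_q eqxx /=; split=> //; apply/eqP; lia.
- move=> p size_p /andP [/andP [dyck_p /eqP sum_s] /eqP def_a].
  have [fph_gt0 lph_gt0] := dyck_peak_heights_gt0 n_gt0 dyck_p.
  have [|||q def_p] := @dyck_framed n p a (s - 2 - a) n_gt0 dyck_p; try lia.
  exists q => //.
  move: size_p dyck_p; rewrite def_p size_framed dyckE nonneg_path_framed => size_p.
  by case/andP=> _ ->; split=> //; lia.
Qed.

Lemma frame_countSS s L :
  frame_count s.+2 L + frame_count s L = frame_count s.+1 L.+1 + npaths 0 s L.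
Proof.
rewrite /frame_count /= big_nat_recl //.
have -> : \sum_(0 <= a < s) npaths a (s.+1 - 2 - a) L.+1 =
    \sum_(0 <= a < s) npaths a.+1 (s - a.+1) L + \sum_(0 <= a < s.-1) npaths a (s - 2 - a) L.
  under eq_big_nat => a _ do rewrite subSS -subnDA add1n npathsS.
  rewrite big_split /=; congr (_ + _); case: s => [|s]; first by rewrite !big_geq.
  by rewrite big_nat_recl //= add0n; apply: eq_big_nat => a _; congr npaths; lia.
by rewrite !subSS !subn0 -addnA addnC.
Qed.

Lemma ndyck_peaks_rec m t : t <= m.*2 ->
  ndyck_peaks m.+2 t.+2 + ndyck_peaks m.+1 t = ndyck_peaks m.+2 t.+1 + npaths 0 t (m.*2 - t).
Proof.
move=> le_t; rewrite !ndyck_peaksE; try lia.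
have -> : 2 * m.+2 - t.+2 - 2 = m.*2 - t by lia.
have -> : 2 * m.+1 - t - 2 = m.*2 - t by lia.
have -> : 2 * m.+2 - t.+1 - 2 = (m.*2 - t).+1 by lia.
exact: frame_countSS.
Qed.

(** * The alternating sums *)

Lemma bin_diagS t j : 'C(t.+2 - j.+1, j.+1) = 'C(t.+1 - j.+1, j.+1) + 'C(t - j, j).
Proof.
have [le_jt | lt_tj] := leqP j t.
  by rewrite subSS subSn // binS subSS.
rewrite !subSS; have [-> ->] : t.+1 - j = 0 /\ t - j = 0 by lia.
by rewrite !bin0n; case: j lt_tj.
Qed.

Section AlternatingSums.
Import GRing.Theory.
Local Open Scope ring_scope.

Definition ballot_formula (m t : nat) : int :=
  \sum_(0 <= j < m) (-1) ^+ j * ('C(t - j, j) * catalan (m - 1 - j))%:Z.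

Lemma ballot_formula_rec m t :
  ballot_formula m.+2 t.+2 = ballot_formula m.+2 t.+1 - ballot_formula m.+1 t.
Proof.
rewrite /ballot_formula big_nat_recl // [in X in _ = X - _]big_nat_recl // !subn0 !bin0.
rewrite -addrA -sumrB; congr (_ + _); apply: eq_big_nat => j _.
rewrite bin_diagS (_ : (m.+2 - 1 - j.+1 = m.+1 - 1 - j)%N); last by lia.
by rewrite PoszM PoszD !PoszM exprS; ring.
Qed.

Lemma ballot_formula_catalan m t : (t <= 1)%N -> ballot_formula m.+1 t = (catalan m)%:Z.
Proof.
move=> le_t1; rewrite /ballot_formula big_nat_recl // big1_seq ?addr0; last first.
  by move=> j _; rewrite (_ : (t - j.+1 = 0)%N) ?bin0n ?mulr0 //; lia.
by rewrite subSS !subn0 bin0 mul1n expr0 mul1r.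
Qed.

Lemma npaths0_formula m t L : (t + L = m.*2)%N -> (npaths 0 t L)%:Z = ballot_formula m.+1 t.
Proof.
elim/ltn_ind: t m L => -[|[|t]] IHt m L def_L.
- by rewrite ballot_formula_catalan // catalan_npaths -def_L.
- by rewrite ballot_formula_catalan // catalan_npaths (_ : m.*2 = L.+1) ?npathsSr //; lia.
- have [m' def_m] : exists m', m = m'.+1 by exists m.-1; lia.
  subst m; rewrite ballot_formula_rec -(IHt t.+1 _ m'.+1 L.+1) -?(IHt t _ m' L); try lia.
  by rewrite (npathsSr 0 t.+1) PoszD addrC addKr.
Qed.

Definition peak_formula (n s : nat) : int :=
  \sum_(1 <= j < (s %/ 2).+1) (-1) ^+ (j - 1) * (j * 'C(s - j, j) * catalan (n - 1 - j))%:Z.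

Lemma peak_formula_widen n s N : (s %/ 2 < N)%N -> peak_formula n s =
  \sum_(0 <= j < N) (-1) ^+ (j - 1) * (j * 'C(s - j, j) * catalan (n - 1 - j))%:Z.
Proof.
move=> lt_sN; rewrite [RHS]big_ltn ?mul0n ?mulr0 ?add0r; last by lia.
rewrite /peak_formula [RHS](big_cat_nat _ (n := (s %/ 2).+1)) //= [X in _ + X]big1_seq ?addr0 //; try lia.
move=> j /andP [_]; rewrite mem_index_iota => /andP [lt_sj _].
by rewrite bin_small ?muln0 ?mul0n ?mulr0 //; lia.
Qed.

(* The bound on [t] matters: for [j >= n] the factor [catalan (n - 1 - j)] is [catalan 0 = 1]. *)
Lemma peak_formula_rec m t : (t <= m.*2)%N ->
  peak_formula m.+2 t.+2 =
  peak_formula m.+2 t.+1 - peak_formula m.+1 t + ballot_formula m.+1 t.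
Proof.
move=> le_t; rewrite (@peak_formula_widen m.+1 t m.+1) ?(@peak_formula_widen _ _ m.+2); try lia.
rewrite big_nat_recl // [in X in _ = X - _ + _]big_nat_recl // !mul0n !mulr0 !add0r.
rewrite /ballot_formula -sumrB -big_split /=.
apply: eq_big_nat => j _; rewrite bin_diagS subSS subn0.
rewrite (_ : (m.+2 - 1 - j.+1 = m.+1 - 1 - j)%N); last by lia.
case: j => [|j]; first by rewrite !mul0n expr0; ring.
by rewrite (_ : (j.+1 - 1 = j)%N) ?subn1 // !PoszM PoszD !exprS; ring.
Qed.

Lemma ndyck_peaks_formula n s : (0 < n)%N -> (s <= 2 * n - 2)%N ->
  (ndyck_peaks n s)%:Z = peak_formula n s.
Proof.
elim/ltn_ind: s n => -[|[|t]] IHs n n_gt0 le_s.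
1,2: by rewrite ndyck_peaksE // /frame_count /peak_formula !big_geq.
have [m def_n] : exists m, n = m.+2 by exists (n - 2)%N; lia.
have le_t : (t <= m.*2)%N by lia.
subst n; apply: (@addIr _ (ndyck_peaks m.+1 t)%:Z).
rewrite -PoszD ndyck_peaks_rec // PoszD (@npaths0_formula m) ?subnKC //.
rewrite (IHs t.+1) ?(IHs t) ?peak_formula_rec //; first by rewrite addrAC subrK.
all: lia.
Qed.

End AlternatingSums.

Theorem proposition3p4 (n s : nat) (hn : 2 <= n) (hs : s <= 2 * n - 2) :
  (#|[set t : (2 * n).-tuple bool |
       dyck n t && (first_peak_height t + last_peak_height t == s)]|%:Z =
   \sum_(1 <= j < (s %/ 2).+1)
      (-1) ^+ (j - 1) * (j * 'C(s - j, j) * catalan (n - 1 - j))%:Z)%R.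
Proof.
rewrite (card_tuple_bool _ (fun p => dyck n p && (first_peak_height p + last_peak_height p == s))).
by rewrite -/(ndyck_peaks n s) ndyck_peaks_formula //; lia.
Qed.
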